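(* Fix a history $H$ with EIP-1559 burning fee $r\ge0$ per unit of size, and consider the Single TFM with split parameter $z\in[0,1]$ and all transactions of the same size $s>0$. Assume users cannot overbid ($c_t\le v_t$), the burning fee is not excessively low (the total size of transactions $t$ in the mempool with $v_t\ge r$ does not exceed the block capacity), and all includers and the block producer follow the indicated allocation rules and add no fake transactions. Then for every user with value $v_t$, the bid $b_t=c_t=\min\{v_t,\ r+\mu^{Cost}_{BP}\}$ is a dominant strategy, irrespective of the user's beliefs.
   Context: Model: in one slot there are users, $m$ includers with distinct orders $1,\dots,m$ (order $1$ best), and one block producer. Each user has a transaction of size $s$ and private value $v_t$ per unit of size. Includers choose inclusion lists (at most $c_{Incl}$ transactions each); the block producer, seeing them, builds a block (at most $c_{block}$ transactions). Each transaction in the block pays burning fee $rs$. Block producer cost $\mu^{Cost}_{BP}\ge0$ and includer cost $\mu^{Cost}_{CM}\ge0$ per unit of size per included user transaction. A user whose transaction is in the block has utility $(v_t-r)s$ minus fees paid; otherwise $0$. Single TFM: the bid is a single number $c_t$. Block producer fee $=\max\{\min\{\mu^{Cost}_{BP}s,\ c_ts-rs\}+\max\{c_ts-rs-\mu^{Cost}_{BP}s,0\}(1-z),\ 0\}$, paid when $t$ is in the block. Committee fee $=\max\{c_ts-rs-\mu^{Cost}_{BP}s,0\}\cdot z$, paid to the smallest-order includer listing $t$, only if $t$ is in the block. Indicated allocation rules. Block producer: among transactions with $c_t\ge r+\mu^{Cost}_{BP}$, include those with highest block producer fee (deterministic tie-breaking) until full. Includer of order $j$: compute the set $S$ the block producer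 would include; discard those with committee fee below $\mu^{Cost}_{CM}s$; sort the rest by committee fee decreasingly (deterministic tie-breaking); includer $j$ takes positions $(j-1)c_{Incl}+1,\dots,jc_{Incl}$. *)

From mathcomp Require Import all_boot all_order all_algebra.
Set Implicit Arguments. Unset Strict Implicit. Unset Printing Implicit Defensive.
Import Order.TTheory GRing.Theory Num.Theory.
Local Open Scope ring_scope.

(* Single TFM, one slot.  Users form a finite type U; every transaction has
   size s.  A bid profile is c : U -> R (c t = the single bid of user t). *)

Section SingleTFM.
Variables (R : realFieldType) (U : finType).
Variables (r s z muBP muCM : R).
Variables (m cIncl cBlock : nat).      (* #includers, IL capacity, block capacity *)
(* deterministic tie-breaking rules: for each bid profile, an ordering of
   all users (used by the stable sort to break ties) *)
Variables (tbBP tbCM : (U -> R) -> seq U).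

Definition bpFee (c : U -> R) (t : U) : R :=
  Num.max (Num.min (muBP * s) (c t * s - r * s)
           + Num.max (c t * s - r * s - muBP * s) 0 * (1 - z)) 0.

Definition cmFee (c : U -> R) (t : U) : R :=
  Num.max (c t * s - r * s - muBP * s) 0 * z.

Definition block (c : U -> R) : seq U :=
  take cBlock
    (sort (fun a b => bpFee c b <= bpFee c a)
          [seq t <- tbBP c | r + muBP <= c t]).

Definition cmList (c : U -> R) : seq U :=
  sort (fun a b => cmFee c b <= cmFee c a)
       [seq t <- tbCM c | (t \in block c) && (muCM * s <= cmFee c t)].

(* inclusion list of the includer of order j.+1 (j : 'I_m, 0-based):
   positions j*cIncl+1 .. (j+1)*cIncl of cmList *)
Definition inclList (c : U -> R) (j : 'I_m) : seq U :=
  take cIncl (drop (j * cIncl) (cmList c)).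

Definition listed (c : U -> R) (t : U) : bool :=
  [exists j : 'I_m, t \in inclList c j].

Definition utility (vt : R) (c : U -> R) (t : U) : R :=
  if t \in block c then
    (vt - r) * s - bpFee c t - (if listed c t then cmFee c t else 0)
  else 0.

End SingleTFM.

Definition updBid (R : Type) (U : eqType) (c : U -> R) (t : U) (b : R) : U -> R :=
  fun u => if u == t then b else c u.

From Pilot Require Import Defs.
From mathcomp Require Import all_boot all_order all_algebra.
From mathcomp Require Import ring lra.
Import Order.TTheory GRing.Theory Num.Theory.
Local Open Scope ring_scope.

(* A winning bid pays the block producer at least its cost muBP * s and the
   committee a nonnegative fee, so no bid earns more than
   max(0, (v_t - r - muBP) s). The threshold bid r + muBP pays exactly the cost
   and nothing to the committee, so it earns that bound as soon as it wins.
   If v_t >= r + muBP it does win: when the burning fee is not too low every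
   transaction clearing the threshold fits in the block. If v_t < r + muBP,
   no bid c_t <= v_t is ever included, so every such bid earns 0. *)

Lemma count_enum (T : finType) (P : pred T) : count P (enum T) = #|P|.
Proof. by rewrite cardE -size_filter /enum_mem filter_predT. Qed.

Section SingleTFM.
Variables (R : realFieldType) (U : finType).
Variables (r s z muBP muCM : R) (m cIncl cBlock : nat).
Variables (tbBP tbCM : (U -> R) -> seq U).
Implicit Types (c : U -> R) (t u : U) (v : U -> R) (vt : R).

Local Notation bpFee := (@bpFee R U r s z muBP).
Local Notation cmFee := (@cmFee R U r s z muBP).
Local Notation block := (block r s z muBP cBlock tbBP).
Local Notation utility vt := (utility r s z muBP muCM m cIncl cBlock tbBP tbCM vt).

Lemma mem_block_bid_ge c t : t \in block c -> r + muBP <= c t.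
Proof. by move/mem_take; rewrite mem_sort mem_filter => /andP[]. Qed.

Lemma mem_block_uncongested c t :
  perm_eq (tbBP c) (enum U) ->
  (#|[pred u | (r + muBP <= c u)%R]| <= cBlock)%N ->
  (t \in block c) = (r + muBP <= c t).
Proof.
move=> tbP small; rewrite /Defs.block take_oversize; last first.
  by rewrite size_sort size_filter (permP tbP) count_enum.
by rewrite mem_sort mem_filter (perm_mem tbP) mem_enum andbT.
Qed.

Lemma utility_not_in_block vt c t : t \notin block c -> utility vt c t = 0.
Proof. by rewrite /Defs.utility => /negbTE ->. Qed.

Hypothesis s_gt0 : 0 < s.
Let s_ge0 : 0 <= s := ltW s_gt0.
Hypothesis muBP_ge0 : 0 <= muBP.

Lemma bpFee_threshold c t : c t = r + muBP -> bpFee c t = muBP * s.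
Proof.
rewrite /Defs.bpFee => ->.
have -> : (r + muBP) * s - r * s = muBP * s by ring.
by rewrite subrr maxxx mul0r addr0 minxx max_l // mulr_ge0.
Qed.

Lemma cmFee_threshold c t : c t = r + muBP -> cmFee c t = 0.
Proof.
rewrite /Defs.cmFee => ->.
have -> : (r + muBP) * s - r * s - muBP * s = 0 by ring.
by rewrite maxxx mul0r.
Qed.

Hypothesis z_ge0 : 0 <= z.
Hypothesis z_le1 : z <= 1.

Lemma cmFee_ge0 c t : 0 <= cmFee c t.
Proof. by rewrite /Defs.cmFee mulr_ge0 // le_max lexx orbT. Qed.

Lemma bpFee_ge_cost c t : r + muBP <= c t -> muBP * s <= bpFee c t.
Proof.
move=> bid_ge; rewrite /Defs.bpFee le_max; apply/orP; left.
have cost_le : muBP * s <= c t * s - r * s by rewrite -mulrBl ler_pM2r //; lra.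
by rewrite (min_l cost_le) lerDl mulr_ge0 ?le_max ?lexx ?orbT ?subr_ge0.
Qed.

Lemma utility_le_surplus vt c t :
  utility vt c t <= Num.max 0 ((vt - r - muBP) * s).
Proof.
rewrite /Defs.utility; case: ifP => [inb|_]; last by rewrite le_max lexx.
have bp := bpFee_ge_cost _ _ (mem_block_bid_ge _ _ inb).
have cm : 0 <= (if listed r s z muBP muCM m cIncl cBlock tbBP tbCM c t
               then cmFee c t else 0) by case: ifP; rewrite ?cmFee_ge0.
rewrite le_max; apply/orP; right; rewrite !mulrBl; lra.
Qed.

Lemma utility_threshold_bid vt c t :
  t \in block c -> c t = r + muBP -> utility vt c t = (vt - r - muBP) * s.
Proof.
move=> inb ct; rewrite /Defs.utility inb.
by rewrite (bpFee_threshold _ _ ct) (cmFee_threshold _ _ ct) if_same subr0 !mulrBl.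
Qed.

Hypothesis tbBP_perm : forall c, perm_eq (tbBP c) (enum U).

Theorem threshold_bid_dominant v t c :
  (#|[pred u | (r <= v u)%R]| <= cBlock)%N -> (forall u, c u <= v u) ->
  utility (v t) c t <= utility (v t) (updBid c t (Num.min (v t) (r + muBP))) t.
Proof.
move=> fee_not_low c_le_v; set c' := updBid c t _.
have c'_le_v u : c' u <= v u.
  by rewrite /c' /updBid; case: eqP => [->|_]; rewrite ?ge_min ?lexx.
have [v_lt|v_ge] := ltrP (v t) (r + muBP).
  rewrite !utility_not_in_block //; apply/negP => /mem_block_bid_ge.
    by have := c'_le_v t; lra.
  by have := c_le_v t; lra.
have c't : c' t = r + muBP by rewrite /c' /updBid eqxx; apply/min_idPr.
have eligible_fit : (#|[pred u | (r + muBP <= c' u)%R]| <= cBlock)%N.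
  apply: leq_trans fee_not_low; apply/subset_leq_card/subsetP => u.
  rewrite !inE => bid_ge; rewrite (le_trans _ (c'_le_v u)) //.
  by rewrite (le_trans _ bid_ge) // lerDl.
have inb : t \in block c' by rewrite mem_block_uncongested // c't.
rewrite (utility_threshold_bid _ _ _ inb c't).
apply: le_trans (utility_le_surplus _ _ _) _.
by rewrite ge_max lexx andbT mulr_ge0 //; lra.
Qed.

End SingleTFM.

Theorem mainTheorem3 (R : realFieldType) (U : finType)
  (r s z muBP muCM : R) (m cIncl cBlock : nat)
  (tbBP tbCM : (U -> R) -> seq U)
  (v : U -> R) :
  0 <= r -> 0 < s -> 0 <= z <= 1 -> 0 <= muBP -> 0 <= muCM ->
  (forall c, perm_eq (tbBP c) (enum U)) ->
  (forall c, perm_eq (tbCM c) (enum U)) ->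
  (* burning fee not excessively low *)
  (#|[pred t | r <= v t]|%:R * s <= cBlock%:R * s) ->
  forall (t : U) (c : U -> R),
    (* nobody overbids (this also covers every deviation c t <= v t of t) *)
    (forall u, c u <= v u) ->
    utility r s z muBP muCM m cIncl cBlock tbBP tbCM (v t) c t
    <= utility r s z muBP muCM m cIncl cBlock tbBP tbCM (v t)
         (updBid c t (Num.min (v t) (r + muBP))) t.
Proof.
move=> _ s_gt0 /andP[z_ge0 z_le1] muBP_ge0 _ tbBP_perm _ fee_not_low t c c_le_v.
apply: threshold_bid_dominant => //.
by rewrite -(ler_nat R) -(ler_pM2r s_gt0).
Qed.
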